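(* Fix real $a$, $b>0$, $c>0$ and a prior $F$ with support $[\alpha,\beta]\subset(0,c)$ and positive variance. Let $x^u(\theta)=k\theta+d$ be the unique symmetric Bayesian Nash equilibrium of the affine relaxation (for $a=0$, $x^u(\theta)=(c-\theta)/(2b)$), and assume it is fully active, i.e. $x^u(\beta)\ge0$. Let $\underline x=x^u(\beta)$, $\overline x=x^u(\alpha)$. If $$\overline x\le\frac1\alpha,\qquad a\le b\alpha,\qquad c\alpha^2-2b\alpha+a\ge0,\qquad \min_{y\in[\underline x,\overline x]}\Bigl(\tfrac12-cy+by^2\Bigr)\ge0,$$ then $x^u$ is a symmetric Bayesian Nash equilibrium of the truncated Bayesian contest.
   Context: Let $P(x,y)=\tfrac12+(x-y)\bigl(c-b(x+y)+axy\bigr)$ and $\bar P=\min\{1,\max\{0,P\}\}$. Types are i.i.d. from $F$. In the affine relaxation, actions are real numbers and a type-$\theta$ player choosing $\tilde x$ against opponent strategy $x(\cdot)$ receives $\int[P(\tilde x,x(\theta'))-\theta\tilde x]\,dF(\theta')$. In the truncated Bayesian contest, actions are efforts in $[0,\infty)$ and the payoff is $\int[\bar P(\tilde x,x(\theta'))-\theta\tilde x]\,dF(\theta')$. *)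

From HB Require Import structures.
From mathcomp Require Import all_boot all_order all_algebra.
From mathcomp Require Import all_classical all_reals all_analysis.
Set Implicit Arguments. Unset Strict Implicit. Unset Printing Implicit Defensive.
Import Order.TTheory GRing.Theory Num.Theory.
Import numFieldNormedType.Exports.
Local Open Scope classical_set_scope.
Local Open Scope ring_scope.

Section Contest.
Variable R : realType.

Definition Pwin (a b c x y : R) : R :=
  2^-1 + (x - y) * (c - b * (x + y) + a * x * y).

Definition Pbar (a b c x y : R) : R :=
  Num.min 1 (Num.max 0 (Pwin a b c x y)).

Definition payoff_aff (F : probability R R) (a b c : R) (x : R -> R)
  (theta xt : R) : R :=
  Rintegral F [set: R] (fun t => Pwin a b c xt (x t) - theta * xt).

Definition payoff_trunc (F : probability R R) (a b c : R) (x : R -> R)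
  (theta xt : R) : R :=
  Rintegral F [set: R] (fun t => Pbar a b c xt (x t) - theta * xt).

Definition support_is (F : probability R R) (al be : R) : Prop :=
  F `[al, be]%classic = 1%E /\
  forall t, al <= t <= be -> forall e : R, 0 < e -> (0 < F (ball t e))%E.

Definition type_mean (F : probability R R) : R := Rintegral F [set: R] (fun t => t).
Definition type_variance (F : probability R R) : R :=
  Rintegral F [set: R] (fun t => (t - type_mean F) ^+ 2).

Definition sym_BNE_affine (F : probability R R) (al be a b c : R)
  (x : R -> R) : Prop :=
  forall theta, al <= theta <= be ->
    forall xt : R, payoff_aff F a b c x theta xt <= payoff_aff F a b c x theta (x theta).

Definition sym_BNE_trunc (F : probability R R) (al be a b c : R)
  (x : R -> R) : Prop :=
  forall theta, al <= theta <= be ->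
    0 <= x theta /\
    forall xt : R, 0 <= xt ->
      payoff_trunc F a b c x theta xt <= payoff_trunc F a b c x theta (x theta).

End Contest.

From mathcomp Require Import all_boot all_order all_algebra.
From mathcomp Require Import all_classical all_reals all_analysis.
From mathcomp Require Import ring lra measurable_realfun.
Import Order.TTheory GRing.Theory Num.Theory.
Import numFieldNormedType.Exports.
Local Open Scope classical_set_scope.
Local Open Scope ring_scope.

(* Against x(t) = k t + d the affine payoff of effort y is G y - theta y and the
   truncated one is H y - theta y, where G and H are the expectations of P and of
   its clamp to [0, 1].  Revealed preference between the types al and be gives
   k <= 0, so all equilibrium efforts lie in [x be, x al], inside [0, 1/al].
   The hypotheses on a make the margin c - b (x + y) + a x y nonnegative and P
   concave in x on [0, 1/al]^2, so P (x, y) >= 0 there as soon as P (0, y) >= 0;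
   together with P (x, y) = 1 - P (y, x) this keeps equilibrium win probabilities
   in [0, 1].  Hence H = G at equilibrium efforts and H <= G on [0, 1/al], while
   efforts above 1/al cost more than 1 >= H and lose to effort 0. *)

Lemma continuous_bounded_itv {R : realType} {f : R -> R} (al be : R) :
  continuous f -> exists M, forall t, al <= t <= be -> `|f t| <= M.
Proof.
move=> cf.
have : bounded_set (f @` `[al, be]).
  apply/compact_bounded/continuous_compact; last exact: segment_compact.
  exact: continuous_subspaceT.
move=> [M [_ hM]]; exists (M + 1) => t ht.
by apply: (hM (M + 1)); [rewrite ltrDl | exists t => //=; rewrite in_itv].
Qed.

Section IntegralOverSupport.
Context {R : realType} {F : probability R R} {al be : R}.

Hypothesis F_itv : F `[al, be]%classic = 1%E.

Lemma continuous_integrable_itv (f : R -> R) :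
  continuous f -> F.-integrable `[al, be]%classic (EFin \o f).
Proof.
move=> cf; have [M fM] := continuous_bounded_itv al be cf.
apply: (measurable_bounded_integrable (measurable_itv _)).
- by move: F_itv => /= ->; rewrite ltry.
- exact: measurable_funS (continuous_measurable_fun cf).
- exists M; split; first exact: num_real.
  move=> M' MM' t /= tI; apply: le_trans (ltW MM').
  by apply: fM; move: tI; rewrite /= in_itv.
Qed.

Lemma Rintegral_itv (f : R -> R) :
  continuous f -> Rintegral F setT f = Rintegral F `[al, be]%classic f.
Proof.
move=> cf.
have mI : measurable (`[al, be]%classic : set R) by exact: measurable_itv.
have F_out : F (~` `[al, be]%classic) = 0%E.
  by rewrite probability_setC // F_itv subee.
have T_out : setT `\` ~` `[al, be]%classic = (`[al, be]%classic : set R).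
  by rewrite setTD setCK.
have fT : F.-integrable setT (EFin \o f).
  rewrite (negligible_integrable _ _ _ F_out) ?T_out //.
  - exact: continuous_integrable_itv.
  - exact: measurableC.
  - by apply/measurable_EFinP; exact: continuous_measurable_fun.
rewrite /Rintegral (negligible_integral _ _ fT F_out) ?T_out //.
exact: measurableC.
Qed.

Lemma Rintegral_subr_cst (f : R -> R) (r : R) : continuous f ->
  Rintegral F setT (fun t => f t - r) = Rintegral F `[al, be]%classic f - r.
Proof.
move=> cf.
have cfr : continuous (fun t => f t - r).
  by move=> t; apply: cvgB; [exact: cf | exact: cvg_cst].
have mI : measurable (`[al, be]%classic : set R) by exact: measurable_itv.
rewrite Rintegral_itv // RintegralB //.
- by rewrite Rintegral_cst //; move: F_itv => /= ->; rewrite mulr1.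
- exact: continuous_integrable_itv.
- exact: finite_measure_integrable_cst.
Qed.

Lemma Rintegral_itv_le_cst (f : R -> R) (M : R) : continuous f ->
  (forall t, al <= t <= be -> f t <= M) -> Rintegral F `[al, be]%classic f <= M.
Proof.
move=> cf fM.
have mI : measurable (`[al, be]%classic : set R) by exact: measurable_itv.
have -> : M = Rintegral F `[al, be]%classic (fun=> M).
  by rewrite Rintegral_cst //; move: F_itv => /= ->; rewrite mulr1.
apply: le_Rintegral => //.
- exact: continuous_integrable_itv.
- exact: finite_measure_integrable_cst.
Qed.

End IntegralOverSupport.

Section WinProbability.
Context {R : realType} {a b c : R}.

Lemma PwinC x y : Pwin a b c x y = 1 - Pwin a b c y x.
Proof. by rewrite /Pwin; field. Qed.

Lemma Pwin0x y : Pwin a b c 0 y = 2^-1 - c * y + b * y ^+ 2.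
Proof. by rewrite /Pwin; ring. Qed.

Lemma Pbar_le1 x y : Pbar a b c x y <= 1.
Proof. by rewrite /Pbar ge_min lexx. Qed.

Lemma Pbar_id x y : 0 <= Pwin a b c x y <= 1 -> Pbar a b c x y = Pwin a b c x y.
Proof. by move=> /andP[p0 p1]; rewrite /Pbar (max_idPr p0); apply/min_idPr. Qed.

Lemma Pbar_le_Pwin x y : 0 <= Pwin a b c x y -> Pbar a b c x y <= Pwin a b c x y.
Proof. by move=> p0; rewrite /Pbar (max_idPr p0) ge_min lexx orbT. Qed.

Lemma continuous_Pwin x k d : continuous (fun t : R => Pwin a b c x (k * t + d)).
Proof.
move=> t; rewrite /Pwin.
have lin : (fun s : R => k * s + d) @ t --> k * t + d.
  by apply: cvgD; [apply: cvgMr; exact: cvg_id | exact: cvg_cst].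
apply: cvgD; first exact: cvg_cst.
apply: cvgM; first by apply: cvgB; [exact: cvg_cst | exact: lin].
apply: cvgD; first apply: cvgB; first exact: cvg_cst.
  by apply: cvgMr; apply: cvgD; [exact: cvg_cst | exact: lin].
by apply: cvgMr; exact: lin.
Qed.

Lemma continuous_Pbar x k d : continuous (fun t : R => Pbar a b c x (k * t + d)).
Proof.
move=> t; rewrite /Pbar.
apply: (@continuous_min _ _ (cst 1) (fun s => Num.max 0 (Pwin a b c x (k * s + d)))).
  exact: cst_continuous.
apply: (@continuous_max _ _ (cst 0)); first exact: cst_continuous.
exact: continuous_Pwin.
Qed.

Context {al : R}.
Hypotheses (b_gt0 : 0 < b) (al_gt0 : 0 < al) (a_le : a <= b * al)
  (corner_ge0 : 0 <= c * al ^+ 2 - 2 * b * al + a).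

Let al_mul_le1 x : x <= al^-1 -> al * x <= 1.
Proof. by rewrite -(ler_pM2l al_gt0) mulfV // lt0r_neq0. Qed.

Lemma Pwin_margin_ge0 x y : 0 <= x <= al^-1 -> 0 <= y <= al^-1 ->
  0 <= c - b * (x + y) + a * x * y.
Proof.
move=> /andP[x0 /al_mul_le1 u1] /andP[y0 /al_mul_le1 v1].
set u := al * x in u1 *; set v := al * y in v1 *.
have u0 : 0 <= u by rewrite mulr_ge0 // ltW.
have v0 : 0 <= v by rewrite mulr_ge0 // ltW.
rewrite -subr_ge0 in u1; rewrite -subr_ge0 in v1.
have edge_ge0 : 0 <= c * al ^+ 2 - b * al by move: a_le corner_ge0; lra.
have vertex_ge0 : 0 <= c * al ^+ 2.
  by move: edge_ge0 (mulr_gt0 b_gt0 al_gt0); lra.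
(* bilinear in (u, v), so a convex combination of its values at the corners of [0,1]^2 *)
have -> : c - b * (x + y) + a * x * y = al ^-2 *
  ((1 - u) * (1 - v) * (c * al ^+ 2) + (u * (1 - v) + (1 - u) * v) * (c * al ^+ 2 - b * al)
  + u * v * (c * al ^+ 2 - 2 * b * al + a)).
  by rewrite /u /v; field; rewrite lt0r_neq0.
apply: mulr_ge0; first by rewrite invr_ge0 exprn_ge0 // ltW.
apply: addr_ge0; first apply: addr_ge0.
- exact: mulr_ge0 (mulr_ge0 u1 v1) vertex_ge0.
- exact: mulr_ge0 (addr_ge0 (mulr_ge0 u0 v1) (mulr_ge0 u1 v0)) edge_ge0.
- exact: mulr_ge0 (mulr_ge0 u0 v0) corner_ge0.
Qed.

(* Pwin is concave in x (its x^2 coefficient is a y - b <= 0), so it stays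
   nonnegative between x = 0 and x = 1/al. *)
Lemma Pwin_ge0 x y : 0 <= x <= al^-1 -> 0 <= y <= al^-1 ->
  0 <= Pwin a b c 0 y -> 0 <= Pwin a b c x y.
Proof.
move=> /andP[x0 xZ] yr Pwin0y; have /andP[y0 yZ] := yr.
set Z := al^-1 in xZ yZ yr *.
have Z_gt0 : 0 < Z by rewrite invr_gt0.
have Z_ge0 := ltW Z_gt0.
have PwinZy : 0 <= Pwin a b c Z y.
  have Zr : 0 <= Z <= Z by rewrite lexx Z_ge0.
  rewrite /Pwin addr_ge0 ?invr_ge0 // mulr_ge0 ?subr_ge0 //.
  exact: Pwin_margin_ge0.
have concave : 0 <= b - a * y.
  have -> : b - a * y = (b * al - a) * y + b * (1 - al * y) by ring.
  by rewrite addr_ge0 // mulr_ge0 // ?subr_ge0 ?al_mul_le1 // ltW.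
have -> : Pwin a b c x y = Z^-1 * ((Z - x) * Pwin a b c 0 y + x * Pwin a b c Z y
   + Z * (b - a * y) * x * (Z - x)).
  by rewrite /Pwin; field; rewrite lt0r_neq0.
apply: mulr_ge0; first by rewrite invr_ge0.
apply: addr_ge0; first apply: addr_ge0.
- by rewrite mulr_ge0 // subr_ge0.
- exact: mulr_ge0.
- by rewrite !mulr_ge0 // subr_ge0.
Qed.

Lemma Pbar_eq_Pwin x y :
  0 <= x <= al^-1 -> 0 <= Pwin a b c 0 x ->
  0 <= y <= al^-1 -> 0 <= Pwin a b c 0 y ->
  Pbar a b c x y = Pwin a b c x y.
Proof.
move=> xr Pwin0x yr Pwin0y; apply: Pbar_id.
by rewrite Pwin_ge0 //= PwinC lerBlDr lerDl Pwin_ge0.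
Qed.

End WinProbability.

Lemma best_response_antitone (R : realType) (G s : R -> R) (th1 th2 : R) :
  (forall y, G y - th1 * y <= G (s th1) - th1 * s th1) ->
  (forall y, G y - th2 * y <= G (s th2) - th2 * s th2) ->
  0 <= (th2 - th1) * (s th1 - s th2).
Proof. by move=> /(_ (s th2)) br1 /(_ (s th1)) br2; nra. Qed.

Lemma affine_antitone_itv (R : realType) (k d al be t : R) :
  0 <= (be - al) * ((k * al + d) - (k * be + d)) -> al <= t <= be ->
  k * be + d <= k * t + d <= k * al + d.
Proof.
move=> mono /andP[al_t t_be].
have [al_be | al_ne_be] := eqVneq al be.
  have -> : t = be by apply/eqP; rewrite eq_le t_be -al_be al_t.
  by rewrite -al_be lexx.
have k_le0 : k <= 0.
  have be_al : 0 < (be - al) ^+ 2.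
    by rewrite exprn_gt0 // subr_gt0 lt_neqAle al_ne_be (le_trans al_t).
  have : k * (be - al) ^+ 2 <= 0 by move: mono; nra.
  by rewrite pmulr_lle0.
by apply/andP; split; nra.
Qed.

Section Equilibrium.
Context {R : realType} {F : probability R R} {a b c k d al be : R}.
Hypothesis F_itv : F `[al, be]%classic = 1%E.

Local Notation xu := (fun t : R => k * t + d).
Let G y := Rintegral F `[al, be]%classic (fun t => Pwin a b c y (xu t)).
Let H y := Rintegral F `[al, be]%classic (fun t => Pbar a b c y (xu t)).

Lemma payoff_aff_expected_win th y : payoff_aff F a b c xu th y = G y - th * y.
Proof. exact/Rintegral_subr_cst/continuous_Pwin. Qed.

Lemma payoff_trunc_expected_win th y : payoff_trunc F a b c xu th y = H y - th * y.
Proof. exact/Rintegral_subr_cst/continuous_Pbar. Qed.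

Lemma sym_BNE_affine_between : sym_BNE_affine F al be a b c xu ->
  forall t, al <= t <= be -> k * be + d <= k * t + d <= k * al + d.
Proof.
move=> BNE t t_in.
have al_be : al <= be by case/andP: t_in; exact: le_trans.
apply: affine_antitone_itv t_in.
by apply: (@best_response_antitone _ G xu) => y;
  rewrite -!payoff_aff_expected_win; apply: BNE; rewrite lexx al_be.
Qed.

Hypotheses (b_gt0 : 0 < b) (al_gt0 : 0 < al) (a_le : a <= b * al)
  (corner_ge0 : 0 <= c * al ^+ 2 - 2 * b * al + a).
Hypothesis xu_range : forall t, al <= t <= be -> 0 <= xu t <= al^-1.
Hypothesis Pwin0_xu_ge0 : forall t, al <= t <= be -> 0 <= Pwin a b c 0 (xu t).

Lemma expected_win_trunc_eq th : al <= th <= be -> H (xu th) = G (xu th).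
Proof.
move=> th_in; apply: eq_Rintegral => t /set_mem; rewrite /= in_itv /= => t_in.
by apply: (Pbar_eq_Pwin b_gt0 al_gt0 a_le corner_ge0); rewrite ?xu_range ?Pwin0_xu_ge0.
Qed.

Lemma expected_win_trunc_le y : 0 <= y <= al^-1 -> H y <= G y.
Proof.
move=> y_in; apply: le_Rintegral; [exact: measurable_itv| | |].
- exact/continuous_integrable_itv/continuous_Pbar.
- exact/continuous_integrable_itv/continuous_Pwin.
- move=> t; rewrite /= in_itv /= => t_in.
  apply/Pbar_le_Pwin/(Pwin_ge0 b_gt0 al_gt0 a_le corner_ge0) => //.
  + exact: xu_range.
  + exact: Pwin0_xu_ge0.
Qed.

Lemma expected_win_trunc_le1 y : H y <= 1.
Proof.
by apply: Rintegral_itv_le_cst => // [|t _]; [exact: continuous_Pbar | exact: Pbar_le1].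
Qed.

Lemma expected_win0_ge0 : 0 <= G 0.
Proof. by apply: Rintegral_ge0 => t; rewrite /= in_itv /=; exact: Pwin0_xu_ge0. Qed.

Lemma sym_BNE_trunc_of_affine :
  sym_BNE_affine F al be a b c xu -> sym_BNE_trunc F al be a b c xu.
Proof.
move=> BNE th th_in; split; first by case/andP: (xu_range _ th_in).
move=> y y_ge0; have br := BNE th th_in.
rewrite !payoff_trunc_expected_win expected_win_trunc_eq //.
have [y_le | y_gt] := leP y al^-1.
  have := br y; rewrite !payoff_aff_expected_win.
  have y_in : 0 <= y <= al^-1 by rewrite y_ge0 y_le.
  by have := expected_win_trunc_le _ y_in; lra.
(* above 1/al the cost exceeds 1 >= H y, so effort 0 does better *)
have th_y : 1 < th * y.
  have al_th : al <= th by case/andP: th_in.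
  apply: lt_le_trans (ler_wpM2r y_ge0 al_th).
  by rewrite -(mulfV (lt0r_neq0 al_gt0)) ltr_pM2l.
have := br 0; rewrite !payoff_aff_expected_win.
by have := expected_win_trunc_le1 y; have := expected_win0_ge0; lra.
Qed.

End Equilibrium.

Theorem proposition10 (R : realType) (a b c : R) (F : probability R R)
  (al be k d : R) :
  0 < b -> 0 < c ->
  0 < al -> al <= be -> be < c ->
  support_is F al be ->
  0 < type_variance F ->
  (* x^u(theta) = k theta + d is the (unique) symmetric BNE of the affine relaxation *)
  sym_BNE_affine F al be a b c (fun t => k * t + d) ->
  (* fully active *)
  0 <= k * be + d ->
  let xlo := k * be + d in
  let xhi := k * al + d in
  xhi <= al^-1 ->
  a <= b * al ->
  0 <= c * al ^+ 2 - 2 * b * al + a ->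
  (forall y, xlo <= y <= xhi -> 0 <= 2^-1 - c * y + b * y ^+ 2) ->
  sym_BNE_trunc F al be a b c (fun t => k * t + d).
Proof.
move=> b_gt0 _ al_gt0 _ _ [F_itv _] _ BNE xlo_ge0 xlo xhi xhi_le a_le corner_ge0 quad_ge0.
have between := sym_BNE_affine_between F_itv BNE.
apply: sym_BNE_trunc_of_affine BNE => // t t_in; have /andP[lo hi] := between t t_in.
- by rewrite (le_trans xlo_ge0 lo) (le_trans hi xhi_le).
- by rewrite Pwin0x quad_ge0 // lo hi.
Qed.
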